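(* Let $X$ be an Alexandroff space. Then for each $x\in X$, there is at most one basic set $S(y)$ ($y\in X$) with $S(y)\subseteq S(x)$.
   Context: A topological space $X$ is an Alexandroff space if arbitrary intersections of open sets are open. In an Alexandroff space, $S(x)$ denotes the minimal open neighborhood of $x$, i.e. the intersection of all open sets containing $x$, which is open. $S(x)$ is called basic if for all $y,z\in X$: whenever $S(x)\subseteq S(y)$ and $S(z)\subseteq S(y)$ then $S(x)\subseteq S(z)$; and whenever $S(x)\not\subseteq S(y)$ then $S(x)\cap S(y)=\emptyset$. *)

From HB Require Import structures.
From mathcomp Require Import all_boot all_order.
From mathcomp Require Import boolp classical_sets topology.
Set Implicit Arguments. Unset Strict Implicit. Unset Printing Implicit Defensive.
Local Open Scope classical_set_scope.

Definition alexandroff (X : topologicalType) : Prop :=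
  forall F : set (set X), (forall A, F A -> open A) -> open (\bigcap_(A in F) A).

Definition minnbhd (X : topologicalType) (x : X) : set X :=
  \bigcap_(A in [set A : set X | open A /\ A x]) A.

Definition basic (X : topologicalType) (x : X) : Prop :=
  forall y z : X,
    (minnbhd x `<=` minnbhd y -> minnbhd z `<=` minnbhd y -> minnbhd x `<=` minnbhd z) /\
    (~ (minnbhd x `<=` minnbhd y) -> minnbhd x `&` minnbhd y = set0).

From mathcomp Require Import all_boot all_order.
From mathcomp Require Import boolp classical_sets topology.
Local Open Scope classical_set_scope.

Lemma basic_minnbhd_sub (X : topologicalType) (x y1 y2 : X) :
  basic y1 -> minnbhd y1 `<=` minnbhd x -> minnbhd y2 `<=` minnbhd x ->
  minnbhd y1 `<=` minnbhd y2.
Proof. by move=> b1 h1 h2; exact: (b1 x y2).1 h1 h2. Qed.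

Theorem theorem16 (X : topologicalType) (hX : alexandroff X) (x : X) :
  forall y1 y2 : X, basic y1 -> basic y2 ->
    minnbhd y1 `<=` minnbhd x -> minnbhd y2 `<=` minnbhd x ->
    minnbhd y1 = minnbhd y2.
Proof.
move=> y1 y2 b1 b2 h1 h2; apply/seteqP; split.
- exact: basic_minnbhd_sub b1 h1 h2.
- exact: basic_minnbhd_sub b2 h2 h1.
Qed.
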